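(* Let $E$ be a finite nonempty set, $f:2^E\to\mathbb{N}$ an integral polymatroid rank function, $\vec t\in\mathbb{N}^E$, and let $C_e:\mathbb{N}\times\mathbb{N}\to\mathbb{R}_+$, $e\in E$, be regular functions. Let $D\subseteq\mathbb{N}$ be a set of integers with $\mathbb{B}_f(d)\neq\emptyset$ for all $d\in D$. Then for every $d,d'\in D$ with $|d-d'|=1$ and every optimal solution $\vec x^*(\vec t,d)$ of $P(\vec t,d)$, there is an optimal solution $\vec x^*(\vec t,d')$ of $P(\vec t,d')$ with $\|\vec x^*(\vec t,d)-\vec x^*(\vec t,d')\|\le |d-d'|=1$.
   Context: $\mathbb{N}=\{0,1,2,\dots\}$. A set function $f:2^E\to\mathbb{N}$ is an integral polymatroid rank function if $f(\emptyset)=0$, $f$ is monotone and submodular. For $\vec x\in\mathbb{N}^E$, $x(U)=\sum_{e\in U}x_e$; $\mathbb{B}_f(d)=\{\vec x\in\mathbb{N}^E: x(U)\le f(U)\ \forall U\subseteq E,\ x(E)=d\}$. $P(\vec t,d)$: minimize $\sum_{e\in E}C_e(x_e;t_e)$ subject to $\vec x\in\mathbb{B}_f(d)$. $\|\cdot\|$ is the $L_1$-norm. For $C:\mathbb{N}\times\mathbb{N}\to\mathbb{R}$, $C^-(x;t)=C(x;t)-C(x-1;t)$ for $x\ge1$; $C$ is regular if $C^-(x;t)\le C^-(x;t+1)$ and $C^-(x;t+1)\le C^-(x+1;t)$ for all $x\ge1$, $t\in\mathbb{N}$. *)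

From mathcomp Require Import all_boot all_order all_algebra.
From mathcomp Require Import reals.
Set Implicit Arguments. Unset Strict Implicit. Unset Printing Implicit Defensive.
Import Order.TTheory GRing.Theory Num.Theory.

Definition polymatroid_rank (E : finType) (f : {set E} -> nat) : Prop :=
  [/\ f set0 = 0%N,
      (forall U V : {set E}, U \subset V -> (f U <= f V)%N) &
      (forall U V : {set E}, (f (U :|: V) + f (U :&: V) <= f U + f V)%N)].

Definition xsum (E : finType) (x : {ffun E -> nat}) (U : {set E}) : nat :=
  (\sum_(e in U) x e)%N.

Definition in_base (E : finType) (f : {set E} -> nat) (d : nat)
    (x : {ffun E -> nat}) : Prop :=
  (forall U : {set E}, (xsum x U <= f U)%N) /\ xsum x setT = d.

Definition Cminus (R : realType) (C : nat -> nat -> R) (x t : nat) : R :=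
  (C x t - C x.-1 t)%R.

Definition regular (R : realType) (C : nat -> nat -> R) : Prop :=
  forall x t : nat, (1 <= x)%N ->
    (Cminus C x t <= Cminus C x t.+1)%R /\
    (Cminus C x t.+1 <= Cminus C x.+1 t)%R.

Definition total_cost (R : realType) (E : finType)
    (C : E -> nat -> nat -> R) (t : {ffun E -> nat}) (x : {ffun E -> nat}) : R :=
  (\sum_(e : E) C e (x e) (t e))%R.

Definition optimal (R : realType) (E : finType) (f : {set E} -> nat)
    (C : E -> nat -> nat -> R) (t : {ffun E -> nat}) (d : nat)
    (x : {ffun E -> nat}) : Prop :=
  in_base f d x /\
  forall y : {ffun E -> nat}, in_base f d y ->
    (total_cost C t x <= total_cost C t y)%R.

Definition l1dist (E : finType) (x y : {ffun E -> nat}) : nat :=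
  (\sum_(e : E) `|x e - y e|)%N.

From mathcomp Require Import all_boot all_order all_algebra.
From mathcomp Require Import reals.
From mathcomp Require Import zify lra.
Set Implicit Arguments. Unset Strict Implicit. Unset Printing Implicit Defensive.
Import Order.TTheory GRing.Theory Num.Theory.

(* Take an optimal solution y of P(t,d') as close as possible to x, say with
   d' = d + 1 (the case d = d' + 1 is the same with the roles of x and y
   exchanged).  Some coordinate e has x_e < y_e.  Regularity makes each
   C_e(.; t_e) discretely convex, so moving units between x and y towards each
   other never increases c(x) + c(y).  If x + 1_e is independent, the pair
   (y - 1_e, x + 1_e) lies in B_f(d) x B_f(d'), and optimality of x forces
   x + 1_e to be optimal for d'.  Otherwise x has a tight set containing e,
   and the submodular exchange argument on the least such set T and the
   largest y-tight set W avoiding e yields u in T \ W with y_u < x_u such that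
   x + 1_e - 1_u and y - 1_e + 1_u are independent; then y - 1_e + 1_u is
   optimal for d' and strictly closer to x, contradicting the choice of y. *)

Section UnitMoves.
Variable E : finType.
Implicit Types (x y a b : {ffun E -> nat}) (U A B : {set E}).

Definition incr x (e : E) : {ffun E -> nat} := [ffun k => x k + (k == e)].
Definition decr x (e : E) : {ffun E -> nat} := [ffun k => x k - (k == e)].
Definition shift x (i j : E) : {ffun E -> nat} := incr (decr x i) j.

Lemma incr_ne x e k : k != e -> incr x e k = x k.
Proof. by rewrite ffunE => /negbTE ->; rewrite addn0. Qed.

Lemma decr_ne x e k : k != e -> decr x e k = x k.
Proof. by rewrite ffunE => /negbTE ->; rewrite subn0. Qed.

Lemma shiftE x i j : i != j -> shift x i j = decr (incr x j) i.
Proof.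
move=> ij; apply/ffunP => k; rewrite !ffunE.
by case: (eqVneq k i) => [->|_]; rewrite ?(negbTE ij) /=; lia.
Qed.

Lemma xsum_setID x A B : xsum x A = xsum x (A :&: B) + xsum x (A :\: B).
Proof. exact: big_setID. Qed.

Lemma xsum_setU x A B : xsum x (A :|: B) = xsum x B + xsum x (A :\: B).
Proof. by rewrite (xsum_setID x _ B) (setIidPr (subsetUr A B)) setDUl setDv setU0. Qed.

Lemma xsum_setUI x A B : xsum x (A :|: B) + xsum x (A :&: B) = xsum x A + xsum x B.
Proof. by rewrite xsum_setU (xsum_setID x A B); lia. Qed.

Lemma xsum_setD1 x e U : e \in U -> xsum x U = x e + xsum x (U :\ e).
Proof. exact: big_setD1. Qed.

Lemma xsum_incr x e U : xsum (incr x e) U = xsum x U + (e \in U).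
Proof.
rewrite /xsum; under eq_bigr do rewrite ffunE.
rewrite big_split /=; congr (_ + _); case: (boolP (e \in U)) => eU.
  by rewrite (big_setD1 _ eU) eqxx big1 // => k /setD1P[/negbTE ->].
by rewrite big1 // => k kU; apply/eqP; rewrite eqb0; apply: contraNneq eU => <-.
Qed.

Lemma xsum_decr x e U : 0 < x e -> xsum (decr x e) U + (e \in U) = xsum x U.
Proof.
move=> xe; rewrite -xsum_incr; apply: eq_bigr => k _; rewrite !ffunE.
by case: (eqVneq k e) => [->|]; lia.
Qed.

Lemma xsum_decr_le x e U : xsum (decr x e) U <= xsum x U.
Proof. by apply: leq_sum => k _; rewrite ffunE leq_subr. Qed.

Lemma xsum_shift x i j : 0 < x i -> xsum (shift x i j) setT = xsum x setT.
Proof. by move=> xi; rewrite xsum_incr -(xsum_decr _ xi) !in_setT. Qed.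

Lemma xsum_lt_exists a b U : xsum a U < xsum b U -> exists2 u, u \in U & a u < b u.
Proof.
move=> lt; apply/exists_inP; apply: contraLR lt => /exists_inPn ge.
by rewrite -leqNgt; apply: leq_sum => u /ge; rewrite -leqNgt.
Qed.

Lemma l1dist_at x y i : (forall k, k != i -> y k = x k) ->
  l1dist x y = `|x i - y i|.
Proof.
move=> same; rewrite /l1dist (bigD1 i) //= big1 ?addn0 // => k /same ->.
by rewrite subrr.
Qed.

Lemma l1dist_lt_at x y y' i : (forall k, k != i -> y' k = y k) ->
  (`|x i - y' i| < `|x i - y i|)%N -> l1dist x y' < l1dist x y.
Proof.
move=> same lt; rewrite /l1dist (bigD1 i) //= [in X in _ < X](bigD1 i) //=.
by rewrite (eq_bigr (fun k => `|x k - y k|)) ?ltn_add2r // => k /same ->.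
Qed.

Lemma l1dist_incr x e : l1dist x (incr x e) <= 1.
Proof. by rewrite (l1dist_at (i := e)) => [|k /incr_ne //]; rewrite ffunE eqxx; lia. Qed.

Lemma l1dist_decr x e : l1dist x (decr x e) <= 1.
Proof. by rewrite (l1dist_at (i := e)) => [|k /decr_ne //]; rewrite ffunE eqxx; lia. Qed.

Lemma l1dist_incr_lt x y e : y e < x e -> l1dist x (incr y e) < l1dist x y.
Proof.
by move=> lt; apply: (l1dist_lt_at (i := e)) => [k /incr_ne //|]; rewrite ffunE eqxx; lia.
Qed.

Lemma l1dist_decr_lt x y e : x e < y e -> l1dist x (decr y e) < l1dist x y.
Proof.
by move=> lt; apply: (l1dist_lt_at (i := e)) => [k /decr_ne //|]; rewrite ffunE eqxx; lia.
Qed.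

Lemma l1dist_shift_lt x y i j : x i < y i -> y j < x j -> l1dist x (shift y i j) < l1dist x y.
Proof.
move=> lti ltj; have ji : j != i by apply: contraTneq ltj => ->; rewrite -leqNgt ltnW.
apply: ltn_trans (l1dist_decr_lt lti); apply: l1dist_incr_lt.
by rewrite decr_ne.
Qed.

End UnitMoves.

Section ExtremalSets.
Variables (T : finType) (P : pred {set T}).

Lemma setI_closed_least A : (forall B C, P B -> P C -> P (B :&: C)) -> P A ->
  exists2 L, P L & forall B, P B -> L \subset B.
Proof.
move=> PI PA; have [L minL _] := minset_exists PA.
exists L => [|B PB]; first exact: minsetp.
by apply/setIidPl; apply: minsetinf minL (PI _ _ (minsetp minL) PB) (subsetIl _ _).
Qed.

Lemma setU_closed_greatest A : (forall B C, P B -> P C -> P (B :|: C)) -> P A ->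
  exists2 G, P G & forall B, P B -> B \subset G.
Proof.
move=> PU PA; have [G maxG _] := maxset_exists PA.
exists G => [|B PB]; first exact: maxsetp.
by apply/setUidPl; apply: maxsetsup maxG (PU _ _ (maxsetp maxG) PB) (subsetUl _ _).
Qed.

End ExtremalSets.

Section Polymatroid.
Variables (E : finType) (f : {set E} -> nat).
Hypothesis polyf : polymatroid_rank f.
Implicit Types (x y a b : {ffun E -> nat}) (U A B : {set E}).

Definition indep x := [forall U, xsum x U <= f U].
Definition tight x U := xsum x U == f U.

Lemma in_baseP d x : in_base f d x <-> indep x /\ xsum x setT = d.
Proof. by split=> [[/forallP]|[/forallP]]. Qed.

Lemma indep_decr x e : indep x -> indep (decr x e).
Proof.
by move=> /forallP ind; apply/forallP => U; exact: leq_trans (xsum_decr_le x e U) (ind U).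
Qed.

Lemma tight_setUI x A B : indep x -> tight x A -> tight x B ->
  tight x (A :|: B) /\ tight x (A :&: B).
Proof.
case: polyf => _ _ submod /forallP ind /eqP tA /eqP tB; rewrite /tight.
have := submod A B; have := ind (A :|: B); have := ind (A :&: B).
by have := xsum_setUI x A B; lia.
Qed.

Lemma not_indep_incr x e : indep x -> ~~ indep (incr x e) ->
  exists2 U : {set E}, e \in U & tight x U.
Proof.
move=> /forallP ind /forallPn[U]; rewrite -ltnNge xsum_incr => viol; exists U.
  by apply: contraLR viol => /negbTE->; rewrite -leqNgt addn0.
by apply/eqP; have := ind U; case: (e \in U) viol => /=; lia.
Qed.

Lemma indep_shift x i j : indep x -> 0 < x i ->
  (forall U, j \in U -> tight x U -> i \in U) -> indep (shift x i j).
Proof.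
move=> /forallP ind xi tight_i; apply/forallP => U.
rewrite xsum_incr; have := xsum_decr U xi; have := ind U.
case jU: (j \in U); case iU: (i \in U) => //=; try lia.
have : ~~ tight x U by apply: contraFN iU; apply: tight_i.
rewrite /tight; lia.
Qed.

Lemma tight_diff_le a b T W : indep a -> indep b -> tight a T -> tight b W ->
  xsum b (T :\: W) <= xsum a (T :\: W).
Proof.
case: polyf => _ _ submod /forallP inda /forallP indb /eqP tT /eqP tW.
have := submod T W; have := indb (T :|: W); have := inda (T :&: W).
by rewrite xsum_setU (xsum_setID a T W) in tT *; lia.
Qed.

Lemma indep_exchange a b e : indep a -> indep b -> a e < b e -> ~~ indep (incr a e) ->
  exists2 u, b u < a u & indep (shift a u e) /\ indep (shift b e u).
Proof.
move=> inda indb ltab /(not_indep_incr inda)[U0 eU0 tU0].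
pose tight_in := [pred U : {set E} | (e \in U) && tight a U].
pose tight_out := [pred U : {set E} | (e \notin U) && tight b U].
have [T /andP[eT tT] T_least] : exists2 T, tight_in T & forall U, tight_in U -> T \subset U.
  apply: setI_closed_least (_ : tight_in U0); last by rewrite inE eU0 tU0.
  move=> A B /andP[eA tA] /andP[eB tB]; have [_ tAB] := tight_setUI inda tA tB.
  by rewrite inE in_setI eA eB tAB.
have [W /andP[eW tW] W_greatest] : exists2 W, tight_out W & forall U, tight_out U -> U \subset W.
  apply: setU_closed_greatest (_ : tight_out set0); last first.
    by case: polyf => f0 _ _; rewrite inE in_set0 /tight f0 /xsum big_set0.
  move=> A B /andP[eA tA] /andP[eB tB]; have [tAB _] := tight_setUI indb tA tB.
  by rewrite inE in_setU negb_or eA eB tAB.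
have eTW : e \in T :\: W by rewrite inE eW eT.
have [u /setD1P[_ /setDP[uT uW]] ltu] : exists2 u, u \in (T :\: W) :\ e & b u < a u.
  apply: xsum_lt_exists; have := tight_diff_le inda indb tT tW.
  rewrite (xsum_setD1 a eTW) (xsum_setD1 b eTW).
  by move: ltab; clear; lia.
exists u => //; split; apply: indep_shift => //.
- exact: leq_ltn_trans (leq0n _) ltu.
- by move=> U eU tU; apply: (subsetP (T_least U _) u uT); rewrite inE eU tU.
- exact: leq_ltn_trans (leq0n _) ltab.
- move=> U uU tU; apply: contraT => eU.
  by move: uW; rewrite (subsetP (W_greatest U _)) // inE eU tU.
Qed.

Lemma in_base_incr d x e : in_base f d x -> indep (incr x e) -> in_base f d.+1 (incr x e).
Proof. by move=> /in_baseP[_ sx] ind; apply/in_baseP; rewrite xsum_incr in_setT sx addn1. Qed.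

Lemma in_base_decr d x e : in_base f d.+1 x -> 0 < x e -> in_base f d (decr x e).
Proof.
move=> /in_baseP[ind sx] xe; apply/in_baseP; split; first exact: indep_decr.
by have := xsum_decr setT xe; rewrite in_setT sx; lia.
Qed.

Lemma in_base_shift d x i j : in_base f d x -> indep (shift x i j) -> 0 < x i ->
  in_base f d (shift x i j).
Proof. by move=> /in_baseP[_ sx] ind xi; apply/in_baseP; rewrite xsum_shift. Qed.

End Polymatroid.

Section RegularCost.
Variable R : realType.

Lemma regular_Cminus_nondecr (C : nat -> nat -> R) t m n : regular C ->
  0 < m -> m <= n -> (Cminus C m t <= Cminus C n t)%R.
Proof.
move=> regC; case: m => // m _; case: n => // n; rewrite ltnS.
have step k : (Cminus C k.+1 t <= Cminus C k.+2 t)%R.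
  by have [/le_trans] := regC k.+1 t isT; apply.
exact: (@homo_leq _ (fun k => Cminus C k.+1 t) (fun x y => x <= y)%R lexx le_trans step).
Qed.

Lemma regular_convex (C : nat -> nat -> R) t p q : regular C -> p < q ->
  (C p.+1 t + C q.-1 t <= C p t + C q t)%R.
Proof.
move=> regC pq; have := regular_Cminus_nondecr t regC (ltn0Sn p) pq.
by rewrite /Cminus /=; lra.
Qed.

Variables (E : finType) (C : E -> nat -> nat -> R) (t : {ffun E -> nat}).
Hypothesis regC : forall e, regular (C e).
Implicit Types (a b : {ffun E -> nat}).

Local Notation cost := (total_cost C t).

Lemma total_cost_transfer a b e : a e < b e ->
  (cost (incr a e) + cost (decr b e) <= cost a + cost b)%R.
Proof.
move=> ab; rewrite /total_cost -!big_split /=; apply: ler_sum => i _.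
case: (eqVneq i e) => [->|ie]; last by rewrite incr_ne // decr_ne.
by rewrite !ffunE eqxx addn1 subn1; apply: regular_convex.
Qed.

Lemma total_cost_exchange a b e u : a e < b e -> b u < a u ->
  (cost (shift a u e) + cost (shift b e u) <= cost a + cost b)%R.
Proof.
move=> lte ltu; have ue : u != e by apply: contraTneq ltu => ->; rewrite -leqNgt ltnW.
have ltu' : decr b e u < incr a e u by rewrite decr_ne // incr_ne.
have := total_cost_transfer lte; have := total_cost_transfer ltu'.
by rewrite (shiftE _ ue); lra.
Qed.

End RegularCost.

Section Optimal.
Variables (R : realType) (E : finType) (f : {set E} -> nat).
Variables (C : E -> nat -> nat -> R) (t : {ffun E -> nat}).
Implicit Types (x y a b : {ffun E -> nat}).

Local Notation cost := (total_cost C t).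

Lemma exists_optimal d : (exists x, in_base f d x) -> exists x, optimal f C t d x.
Proof.
case=> x0 base_x0.
have bounded x : in_base f d x -> forall e, x e < d.+1.
  by move=> [_ <-] e; rewrite ltnS /xsum (bigD1 e) //= leq_addr.
pose nat_of (z : {ffun E -> 'I_d.+1}) : {ffun E -> nat} := [ffun e => val (z e)].
pose ord_of x : {ffun E -> 'I_d.+1} := [ffun e => inord (x e)].
have ord_ofK x : in_base f d x -> nat_of (ord_of x) = x.
  by move=> bx; apply/ffunP => e; rewrite !ffunE /= inordK // bounded.
pose in_base_b z := indep f (nat_of z) && (xsum (nat_of z) setT == d).
have in_base_ord x : in_base f d x -> in_base_b (ord_of x).
  by move=> /[dup] bx /in_baseP[ind sx]; rewrite /in_base_b ord_ofK // ind sx eqxx.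
have [z /andP[ind /eqP sz] zmin] := arg_minP (cost \o nat_of) (in_base_ord _ base_x0).
exists (nat_of z); split=> [|x bx]; first exact/in_baseP.
by have := zmin _ (in_base_ord _ bx); rewrite /= ord_ofK.
Qed.

Lemma optimal_of_pair d d' x y p q : optimal f C t d x -> optimal f C t d' y ->
  in_base f d p -> in_base f d' q -> (cost p + cost q <= cost x + cost y)%R ->
  optimal f C t d' q.
Proof.
move=> [_ x_min] [_ y_min] bp bq le; split=> // z bz.
by have := x_min _ bp; have := y_min _ bz; lra.
Qed.

Hypotheses (polyf : polymatroid_rank f) (regC : forall e, regular (C e)).

Lemma base_pair_exchange d a b : in_base f d a -> in_base f d.+1 b ->
  exists a' b', [/\ in_base f d a', in_base f d.+1 b',
    (cost a' + cost b' <= cost a + cost b)%R &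
    (l1dist a b' <= 1 /\ l1dist b a' <= 1) \/
    (l1dist a b' < l1dist a b /\ l1dist b a' < l1dist b a)].
Proof.
move=> /[dup] ba /in_baseP[inda sa] /[dup] bb /in_baseP[indb sb].
have [e _ lte] : exists2 e, e \in setT & a e < b e by apply: xsum_lt_exists; lia.
have be_pos : 0 < b e := leq_ltn_trans (leq0n _) lte.
case: (boolP (indep f (incr a e))) => [ind_incr | /(indep_exchange polyf inda indb lte)].
  exists (decr b e), (incr a e); split.
  - exact: in_base_decr.
  - exact: in_base_incr.
  - by have := total_cost_transfer t regC lte; lra.
  - by left; rewrite l1dist_incr l1dist_decr.
move=> [u ltu [ind_a' ind_b']]; exists (shift a u e), (shift b e u); split.
- exact: in_base_shift (leq_ltn_trans (leq0n _) ltu).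
- exact: in_base_shift.
- exact: total_cost_exchange.
- by right; rewrite !l1dist_shift_lt.
Qed.

Lemma optimal_step d d' x y : optimal f C t d x -> optimal f C t d' y ->
  d' = d.+1 \/ d = d'.+1 ->
  (exists x', optimal f C t d' x' /\ l1dist x x' <= 1) \/
  (exists y', optimal f C t d' y' /\ l1dist x y' < l1dist x y).
Proof.
move=> Ox Oy [dd'|dd']; subst.
  have [a' [b' [ba' bb' le dist]]] := base_pair_exchange Ox.1 Oy.1.
  have Ob' := optimal_of_pair Ox Oy ba' bb' le.
  by case: dist => [[dist _]|[dist _]]; [left|right]; exists b'.
have [a' [b' [ba' bb' le dist]]] := base_pair_exchange Oy.1 Ox.1.
have Oa' : optimal f C t d' a' by apply: optimal_of_pair Ox Oy bb' ba' _; lra.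
by case: dist => [[_ dist]|[_ dist]]; [left|right]; exists a'.
Qed.

Lemma optimal_within_one d d' x y : optimal f C t d x -> optimal f C t d' y ->
  d' = d.+1 \/ d = d'.+1 -> exists x', optimal f C t d' x' /\ l1dist x x' <= 1.
Proof.
move=> Ox Oy dd'; have [n] := ubnP (l1dist x y).
elim: n => // n IHn in y Oy * => /ltnSE le_n.
have [//|[y' [Oy' closer]]] := optimal_step Ox Oy dd'.
exact: IHn y' Oy' (leq_trans closer le_n).
Qed.

End Optimal.

Theorem theorem3p4 (R : realType) (E : finType) (f : {set E} -> nat)
    (t : {ffun E -> nat}) (C : E -> nat -> nat -> R) (D : nat -> Prop) :
  (0 < #|E|)%N ->
  polymatroid_rank f ->
  (forall e x s, (0 <= C e x s)%R) ->
  (forall e, regular (C e)) ->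
  (forall d, D d -> exists x : {ffun E -> nat}, in_base f d x) ->
  forall d d' : nat, D d -> D d' -> `|(d%:Z - d'%:Z)%R|%N = 1%N ->
  forall x : {ffun E -> nat}, optimal f C t d x ->
  exists x' : {ffun E -> nat}, optimal f C t d' x' /\
    (l1dist x x' <= `|(d%:Z - d'%:Z)%R|%N)%N.
Proof.
move=> _ polyf _ regC nonempty d d' _ Dd' dist1 x Ox; rewrite dist1.
have [y Oy] := exists_optimal C t (nonempty d' Dd').
by apply: (optimal_within_one polyf regC Ox Oy); lia.
Qed.
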